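(* Let $y\in\mathbb{R}^n$, $X\in\mathbb{R}^{n\times p}$, $\lambda>0$, and consider the strong hierarchical lasso with quadratic loss written in the form $$\min_{\phi\in\mathbb{R}^{2p+2p^2}}\ \frac12\|y-\tilde X\phi\|^2+w^T\phi\quad\text{s.t.}\quad D\phi\ge0,\ L\phi=0,$$ with $\phi,\tilde X,w,D,L$ as in the context. Suppose $\hat\phi$ is a solution and let $\mathcal A(\hat\phi)=\{i:[D\hat\phi]_i>0\}$. Let $D_{-\mathcal A(\hat\phi)}$ be the submatrix of rows $D_i$ with $i\notin\mathcal A(\hat\phi)$ and $P=P_{\mathrm{null}(L)\cap\mathrm{null}(D_{-\mathcal A(\hat\phi)})}$. Then $$\hat\phi=(\tilde XP)^+\big(y-(P\tilde X^T)^+w\big)+b$$ for some $b\in\mathrm{null}(\tilde X)\cap\mathrm{null}(L)\cap\mathrm{null}(D_{-\mathcal A(\hat\phi)})$ satisfying $D_i\big[(\tilde XP)^+\big(y-(P\tilde X^T)^+w\big)+b\big]>0$ for all $i\in\mathcal A(\hat\phi)$.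
   Context: $A^+$ denotes the Moore–Penrose pseudoinverse and $P_S$ the orthogonal projection onto a subspace $S$; $\mathrm{null}(\cdot)$ is the null space. Let $x_j$ be the $j$th column of $X$ and $Z\in\mathbb{R}^{n\times p^2}$ the matrix whose column indexed by $(j,k)$ is $x_j*x_k$ (elementwise product), ordered consistently with the vectorization of $p\times p$ matrices. The variable is $\phi=(\beta^+,\beta^-,\mathrm{vec}(\Theta^+),\mathrm{vec}(\Theta^-))$ with $\beta^\pm\in\mathbb{R}^p$, $\Theta^\pm\in\mathbb{R}^{p\times p}$; $\tilde X=(X,\,-X,\,Z/2,\,-Z/2)$ and $w=(\lambda\mathbf 1_p,\lambda\mathbf 1_p,\frac{\lambda}{2}\mathbf 1_{p^2},\frac{\lambda}{2}\mathbf 1_{p^2})$. The rows of $D$ encode the inequality constraints: for each $j$, $\beta^+_j\ge0$, $\beta^-_j\ge0$, and $\beta^+_j+\beta^-_j-\mathbf 1^T(\Theta^+_j+\Theta^-_j)\ge0$ (where $\Theta^\pm_j$ is the $j$th row); and for each $j\ne k$, $\Theta^+_{jk}\ge0$, $\Theta^-_{jk}\ge0$. The rows of $L$ encode the equality constraints $\Theta^+_{jj}=\Theta^-_{jj}=0$ for all $j$ and $\Theta^+-\Theta^-=(\Theta^+-\Theta^-)^T$. (This is the strong hierarchical lasso $\min q(\beta_0,\beta^+-\beta^-,\Theta)+\lambda\mathbf 1^T(\beta^++\beta^-)+\frac\lambda2\sum_{j\ne k}|\Theta_{jk}|$ s.t. $\Theta=\Theta^T$, $\sum_k|\Theta_{jk}|\le\beta^+_j+\beta^-_j$,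 $\beta^\pm\ge0$, with quadratic loss, no intercept, rewritten with $\Theta=\Theta^+-\Theta^-$.) *)

From HB Require Import structures.
From mathcomp Require Import all_boot all_order all_algebra.
From mathcomp Require Import reals.
From Stdlib Require Import ClassicalEpsilon.
Set Implicit Arguments. Unset Strict Implicit. Unset Printing Implicit Defensive.
Import Order.TTheory GRing.Theory Num.Theory.
Local Open Scope ring_scope.

Section Defs.
Variable R : realType.

(** Moore--Penrose pseudoinverse: the (unique) matrix satisfying the four
    Penrose conditions (it always exists over the reals). *)
Definition penrose m n (A : 'M[R]_(m, n)) (B : 'M[R]_(n, m)) : Prop :=
  [/\ A *m B *m A = A, B *m A *m B = B,
      (A *m B)^T = A *m B & (B *m A)^T = B *m A].

Definition pinv m n (A : 'M[R]_(m, n)) : 'M[R]_(n, m) :=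
  epsilon (inhabits 0) (penrose A).

Definition is_orth_proj N (S : 'cV[R]_N -> Prop) (P : 'M[R]_N) : Prop :=
  [/\ P^T = P, P *m P = P & forall v, S v <-> P *m v = v].

Definition orth_proj N (S : 'cV[R]_N -> Prop) : 'M[R]_N :=
  epsilon (inhabits 0) (is_orth_proj S).

Definition nullsp m N (M : 'M[R]_(m, N)) (v : 'cV[R]_N) : Prop := M *m v = 0.

(** Dimension of phi = (beta+, beta-, vec Theta+, vec Theta-). *)
Definition dimphi (p : nat) : nat := p + (p + (p * p + p * p)).

Definition vecc p (T : 'M[R]_p) : 'cV[R]_(p * p) := (mxvec T)^T.

Definition phi_of p (bp bm : 'cV[R]_p) (Tp Tm : 'M[R]_p) : 'cV[R]_(dimphi p) :=
  col_mx bp (col_mx bm (col_mx (vecc Tp) (vecc Tm))).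

Definition rowblk p (a b : 'rV[R]_p) (c d : 'rV[R]_(p * p)) : 'rV[R]_(dimphi p) :=
  row_mx a (row_mx b (row_mx c d)).

Definition Zmat n p (X : 'M[R]_(n, p)) : 'M[R]_(n, p * p) :=
  \matrix_(r < n) mxvec (\matrix_(j < p, k < p) (X r j * X r k)).

Definition Xtil n p (X : 'M[R]_(n, p)) : 'M[R]_(n, dimphi p) :=
  row_mx X (row_mx (- X) (row_mx (2^-1 *: Zmat X) (- (2^-1 *: Zmat X)))).

Definition wvec p (lam : R) : 'cV[R]_(dimphi p) :=
  col_mx (const_mx lam) (col_mx (const_mx lam)
    (col_mx (const_mx (lam / 2)) (const_mx (lam / 2)))).

(** Row indices of D:
    inl(inl(inl(inl j))) : beta+_j >= 0
    inl(inl(inl(inr j))) : beta-_j >= 0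
    inl(inl(inr j))      : beta+_j + beta-_j - 1^T(Theta+_j + Theta-_j) >= 0
    inl(inr (j,k)), j<>k : Theta+_jk >= 0
    inr (j,k), j<>k      : Theta-_jk >= 0 *)
Definition offdiag p := {jk : 'I_p * 'I_p | jk.1 != jk.2}.
Definition Didx p : finType :=
  ('I_p + 'I_p + 'I_p + offdiag p + offdiag p)%type.

Definition erow p (j : 'I_p) : 'rV[R]_p := delta_mx 0 j.
Definition erow2 p (j k : 'I_p) : 'rV[R]_(p * p) := mxvec (delta_mx j k).
Definition rowsum p (j : 'I_p) : 'rV[R]_(p * p) :=
  mxvec (\matrix_(a < p, b < p) (a == j)%:R).

Definition Drow p (i : Didx p) : 'rV[R]_(dimphi p) :=
  match i with
  | inl (inl (inl (inl j))) => rowblk (erow j) 0 0 0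
  | inl (inl (inl (inr j))) => rowblk 0 (erow j) 0 0
  | inl (inl (inr j)) => rowblk (erow j) (erow j) (- rowsum j) (- rowsum j)
  | inl (inr jk) => rowblk 0 0 (erow2 (sval jk).1 (sval jk).2) 0
  | inr jk => rowblk 0 0 0 (erow2 (sval jk).1 (sval jk).2)
  end.

Definition Dmat p : 'M[R]_(#|Didx p|, dimphi p) :=
  \matrix_(i < #|Didx p|) Drow (enum_val i).

(** Rows of L: Theta+_jj = 0, Theta-_jj = 0, and
    (Theta+ - Theta-)_jk - (Theta+ - Theta-)_kj = 0 for all (j,k). *)
Definition Lidx p : finType := ('I_p + 'I_p + ('I_p * 'I_p))%type.

Definition Lrow p (i : Lidx p) : 'rV[R]_(dimphi p) :=
  match i with
  | inl (inl j) => rowblk 0 0 (erow2 j j) 0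
  | inl (inr j) => rowblk 0 0 0 (erow2 j j)
  | inr jk => rowblk 0 0 (erow2 jk.1 jk.2 - erow2 jk.2 jk.1)
                         (erow2 jk.2 jk.1 - erow2 jk.1 jk.2)
  end.

Definition Lmat p : 'M[R]_(#|Lidx p|, dimphi p) :=
  \matrix_(i < #|Lidx p|) Lrow (enum_val i).

Definition objective n p (y : 'cV[R]_n) (X : 'M[R]_(n, p)) (lam : R)
    (phi : 'cV[R]_(dimphi p)) : R :=
  2^-1 * \sum_(i < n) ((y - Xtil X *m phi) i 0) ^+ 2
  + ((wvec p lam)^T *m phi) 0 0.

Definition feasible p (phi : 'cV[R]_(dimphi p)) : Prop :=
  (forall i, 0 <= (Dmat p *m phi) i 0) /\ Lmat p *m phi = 0.

Definition is_solution n p (y : 'cV[R]_n) (X : 'M[R]_(n, p)) (lam : R)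
    (phi : 'cV[R]_(dimphi p)) : Prop :=
  feasible phi /\
  forall phi', feasible phi' -> objective y X lam phi <= objective y X lam phi'.

Definition active p (phi : 'cV[R]_(dimphi p)) : {set 'I_#|Didx p|} :=
  [set i | 0 < (Dmat p *m phi) i 0].

Definition null_Dinact p (A : {set 'I_#|Didx p|}) (v : 'cV[R]_(dimphi p)) : Prop :=
  forall i, i \notin A -> (Dmat p *m v) i 0 = 0.

End Defs.

(* A minimiser of the convex quadratic objective over the polyhedron
   {D phi >= 0, L phi = 0} stays feasible when moved a little in any direction
   s of the face null(L) /\ null(D_{-A}), since the active rows have slack and
   the inactive ones are not moved.  The first-order condition along these
   directions says that P (Xt^T (Xt phi - y) + w) = 0, i.e. phi solves the
   normal equations of least squares restricted to range P.  The Penrose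
   identities then show that u = (Xt P)^+ (y - (P Xt^T)^+ w) lies in range P
   and has Xt u = Xt phi, so b := phi - u is in the required null spaces. *)
From HB Require Import structures.
From mathcomp Require Import all_boot all_order all_algebra.
From mathcomp Require Import reals.
From mathcomp Require Import ring lra.
From Stdlib Require Import ClassicalEpsilon.
Set Implicit Arguments. Unset Strict Implicit. Unset Printing Implicit Defensive.
Import Order.TTheory GRing.Theory Num.Theory.
Local Open Scope ring_scope.

Section RealField.
Variable R : realFieldType.

Lemma mulmx_tr_eq0 a b (M : 'M[R]_(a, b)) : M *m M^T = 0 -> M = 0.
Proof.
move=> MMt0; apply/matrixP => i j; rewrite mxE.
have sq_ge0 (k : 'I_b) : true -> 0 <= M i k * M i k.
  by move=> _; rewrite -expr2 sqr_ge0.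
have sum_sq0 : \sum_(k < b) M i k * M i k = 0.
  have /matrixP/(_ i i) := MMt0; rewrite !mxE => MMt0_ii.
  by rewrite -[RHS]MMt0_ii; apply: eq_bigr => k _; rewrite mxE.
by have /eqP := psumr_eq0P sq_ge0 sum_sq0 (i := j) isT; rewrite mulf_eq0 orbb => /eqP.
Qed.

Lemma trmx_mul_eq0 a b (M : 'M[R]_(a, b)) : M^T *m M = 0 -> M = 0.
Proof.
by move=> H; apply: trmx_inj; rewrite trmx0; apply: mulmx_tr_eq0; rewrite trmxK.
Qed.

Lemma mulmx_gram_eq0 a b c (M : 'M[R]_(a, b)) (v : 'M[R]_(b, c)) :
  M^T *m (M *m v) = 0 -> M *m v = 0.
Proof.
by move=> H; apply: trmx_mul_eq0; rewrite trmx_mul -mulmxA H mulmx0.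
Qed.

Lemma unitmx_gram r m (B : 'M[R]_(r, m)) : row_free B -> B *m B^T \in unitmx.
Proof.
move=> freeB; rewrite -row_free_unit -kermx_eq0; apply/eqP.
set K := kermx _; have KBBt0 : K *m (B *m B^T) = 0 by exact: mulmx_ker.
have : (K *m B) *m (K *m B)^T = 0.
  by rewrite trmx_mul !mulmxA -(mulmxA K) KBBt0 mul0mx.
by move/mulmx_tr_eq0/eqP; rewrite mulmx_free_eq0 // => /eqP.
Qed.

Lemma sym_idem_quad_eq0 N (P : 'M[R]_N) (g : 'cV[R]_N) :
  P^T = P -> P *m P = P -> g^T *m (P *m g) = 0 -> P *m g = 0.
Proof.
move=> symP idemP gPg0; apply: trmx_mul_eq0.
by rewrite trmx_mul symP -mulmxA (mulmxA P) idemP.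
Qed.

Lemma finite_pos_lower_bound (I : finType) (A : pred I) (f : I -> R) :
  (forall i, A i -> 0 < f i) -> exists2 e, 0 < e & forall i, A i -> e <= f i.
Proof.
move=> f_gt0; set S := \sum_(i | A i) (f i)^-1.
have S_ge0 : 0 <= S by apply: sumr_ge0 => i /f_gt0 fi; rewrite invr_ge0 ltW.
exists (S + 1)^-1; first by rewrite invr_gt0; lra.
move=> i Ai; have fi := f_gt0 i Ai.
rewrite -[f i]invrK lef_pV2 ?posrE ?invr_gt0 //; last by lra.
have rest_ge0 : 0 <= \sum_(j | A j && (j != i)) (f j)^-1.
  by apply: sumr_ge0 => j /andP [/f_gt0 fj _]; rewrite invr_ge0 ltW.
by rewrite /S (bigD1 i) //=; lra.
Qed.

Lemma addr_small_ge0 (x z t : R) :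
  0 < x -> `|t| <= x / (`|z| + 1) -> 0 <= x + t * z.
Proof.
move=> x_gt0; have z1_gt0 : 0 < `|z| + 1 by rewrite ltr_wpDl.
rewrite ler_pdivlMr // => tz1.
have : - (`|t| * `|z|) <= t * z by rewrite -normrM lerNnormlW.
have := normr_ge0 t; nra.
Qed.

Lemma quadratic_ge0_linear_eq0 (a c e : R) : 0 <= c -> 0 < e ->
  (forall t, `|t| <= e -> 0 <= a * t + t ^+ 2 * c) -> a = 0.
Proof.
move=> c_ge0 e_gt0 Hq; apply/eqP/negPn/negP => a_neq0.
have a_gt0 : 0 < `|a| by rewrite normr_gt0.
have c1_gt0 : 0 < c + 1 by lra.
set q := `|a| / (c + 1).
have qc1 : q * (c + 1) = `|a| by rewrite /q mulfVK //; lra.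
have q_gt0 : 0 < q by rewrite /q divr_gt0.
(* with 0 < t <= q, testing t and -t gives |a| <= c t <= c q < |a| *)
have [t [t_gt0 te tq]] : exists t, [/\ 0 < t, t <= e & t <= q].
  by case: (lerP e q) => h; [exists e | exists q; split => //; apply: ltW].
have := Hq t; have := Hq (- t); rewrite normrN gtr0_norm // => /(_ te) hm /(_ te) hp.
have at_le : `|a| * t <= c * t ^+ 2.
  by case: (lerP 0 a) => ha; [rewrite ger0_norm | rewrite ltr0_norm]; nra.
have a_le : `|a| <= c * t by rewrite -(ler_pM2r t_gt0) -mulrA -expr2.
have : c * t <= c * q by rewrite ler_wpM2l.
have : c * q = `|a| - q by rewrite -qc1; ring.
lra.
Qed.

Lemma kernel_mask_mulmxP m N (D : 'M[R]_(m, N)) (A : {set 'I_m}) (v : 'cV[R]_N) :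
  (forall i, i \notin A -> (D *m v) i 0 = 0) <->
  diag_mx (\row_i (i \notin A)%:R) *m D *m v = 0.
Proof.
rewrite -mulmxA; split.
- move=> Dv; apply/matrixP => i j; rewrite mul_diag_mx !mxE (ord1 j).
  case: (boolP (i \in A)) => iA; first by rewrite mul0r.
  by have := Dv i iA; rewrite mxE => ->; rewrite mulr0.
- move=> /matrixP Dv i iA; rewrite mxE.
  by have := Dv i 0; rewrite mul_diag_mx !mxE iA mul1r.
Qed.

Definition qobj n N (Xt : 'M[R]_(n, N)) (y : 'cV[R]_n) (w phi : 'cV[R]_N) : R :=
  2^-1 * \sum_(i < n) ((y - Xt *m phi) i 0) ^+ 2 + (w^T *m phi) 0 0.

Definition qgrad n N (Xt : 'M[R]_(n, N)) (y : 'cV[R]_n) (w phi : 'cV[R]_N) : 'cV[R]_N :=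
  w - Xt^T *m (y - Xt *m phi).

Lemma qobj_shift n N (Xt : 'M[R]_(n, N)) y w phi s t :
  qobj Xt y w (phi + t *: s) = qobj Xt y w phi
    + t * ((qgrad Xt y w phi)^T *m s) 0 0
    + t ^+ 2 * (2^-1 * \sum_(i < n) ((Xt *m s) i 0) ^+ 2).
Proof.
rewrite /qobj /qgrad; set r := y - Xt *m phi; set v := Xt *m s.
have res_shift i : (y - Xt *m (phi + t *: s)) i 0 = r i 0 - t * v i 0.
  by rewrite mulmxDr -scalemxAr !mxE; ring.
have lin_shift : (w^T *m (phi + t *: s)) 0 0 = (w^T *m phi) 0 0 + t * (w^T *m s) 0 0.
  by rewrite mulmxDr -scalemxAr !mxE.
have grad_s : ((w - Xt^T *m r)^T *m s) 0 0 = (w^T *m s) 0 0 - \sum_i r i 0 * v i 0.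
  rewrite linearB /= mulmxBl trmx_mul trmxK -mulmxA !mxE; congr (_ - _).
  by apply: eq_bigr => i _; rewrite mxE.
have -> : \sum_(i < n) ((y - Xt *m (phi + t *: s)) i 0) ^+ 2 =
    \sum_(i < n) (r i 0) ^+ 2 - 2 * t * \sum_i r i 0 * v i 0
    + t ^+ 2 * \sum_(i < n) (v i 0) ^+ 2.
  rewrite !mulr_sumr -sumrB -big_split /=; apply: eq_bigr => i _.
  by rewrite res_shift; ring.
by rewrite lin_shift grad_s; field.
Qed.

Lemma qobj_min_dir n N (Xt : 'M[R]_(n, N)) y w phi s (e : R) : 0 < e ->
  (forall t, `|t| <= e -> qobj Xt y w phi <= qobj Xt y w (phi + t *: s)) ->
  ((qgrad Xt y w phi)^T *m s) 0 0 = 0.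
Proof.
move=> e_gt0 min_phi.
apply: (quadratic_ge0_linear_eq0 (c := 2^-1 * \sum_i ((Xt *m s) i 0) ^+ 2) _ e_gt0).
  by rewrite mulr_ge0 ?invr_ge0 ?sumr_ge0 // => i _; rewrite sqr_ge0.
by move=> t /min_phi; rewrite qobj_shift; lra.
Qed.

End RealField.

Section PseudoInverse.
Variable R : realType.

Lemma penrose_full_rank_factor m r n (C : 'M[R]_(m, r)) (F : 'M[R]_(r, n)) :
  row_free F -> row_free C^T ->
  penrose (C *m F) (F^T *m invmx (F *m F^T) *m invmx (C^T *m C) *m C^T).
Proof.
move=> freeF freeCt; have := unitmx_gram freeF; have := unitmx_gram freeCt.
rewrite trmxK; set G1 := F *m F^T; set G2 := C^T *m C => unitG2 unitG1.
have G1K k (M : 'M_(k, r)) : M *m F *m F^T *m invmx G1 = M.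
  by rewrite -(mulmxA M F) -/G1 -mulmxA mulmxV // mulmx1.
have G2K k (M : 'M_(k, r)) : M *m invmx G2 *m C^T *m C = M.
  by rewrite -(mulmxA _ C^T C) -/G2 -mulmxA mulVmx // mulmx1.
have symG1 : G1^T = G1 by rewrite /G1 trmx_mul trmxK.
have symG2 : G2^T = G2 by rewrite /G2 trmx_mul trmxK.
split; rewrite !mulmxA ?G1K ?G2K ?G1K //.
- by rewrite !trmx_mul trmxK trmx_inv symG2 mulmxA.
- by rewrite !trmx_mul trmxK trmx_inv symG1 mulmxA.
Qed.

Lemma pinvP m n (A : 'M[R]_(m, n)) : penrose A (pinv A).
Proof.
rewrite /pinv; apply: epsilon_spec.
have freeCt : row_free (col_base A)^T.
  by have := col_base_full A; rewrite /row_full /row_free mxrank_tr.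
have := penrose_full_rank_factor (row_base_free A) freeCt.
by rewrite mulmx_base => penroseA; eexists; exact: penroseA.
Qed.

Lemma orth_proj_kernel N k (K : 'M[R]_(k, N)) (S : 'cV[R]_N -> Prop) :
  (forall v, S v <-> K *m v = 0) -> is_orth_proj S (orth_proj S).
Proof.
move=> SK; rewrite /orth_proj; apply: epsilon_spec.
have [KKpK KpKKp _ symKpK] := pinvP K; set Kp := pinv K in KKpK KpKKp symKpK *.
exists (1%:M - Kp *m K); split.
- by rewrite linearB /= trmx1 symKpK.
- rewrite mulmxBl mul1mx mulmxBr mulmx1 mulmxA KpKKp.
  by apply/matrixP => i j; rewrite !mxE; ring.
- move=> v; rewrite SK mulmxBl mul1mx; split=> [Kv0|].
    by rewrite -mulmxA Kv0 mulmx0 subr0.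
  move=> /eqP; rewrite subr_eq addrC -subr_eq subrr eq_sym => /eqP KpKv0.
  by rewrite -KKpK -!mulmxA (mulmxA Kp) KpKv0 mulmx0.
Qed.

Lemma proj_mul_pinv N n (M : 'M[R]_(n, N)) (P : 'M[R]_N) :
  P^T = P -> P *m P = P -> P *m pinv (M *m P) = pinv (M *m P).
Proof.
move=> symP idemP; have [_ MpMMp _ symMpM] := pinvP (M *m P).
set Mp := pinv _ in MpMMp symMpM *.
have -> : Mp = (M *m P)^T *m (Mp^T *m Mp).
  by rewrite -{1}MpMMp -symMpM trmx_mul !mulmxA.
by rewrite trmx_mul symP !mulmxA idemP.
Qed.

(* The normal equations of least squares restricted to range P, solved with
   the two pseudoinverses appearing in the theorem. *)
Lemma pinv_normal_solution N n (Xt : 'M[R]_(n, N)) (P : 'M[R]_N) (y : 'cV[R]_n)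
    (w phi : 'cV[R]_N) :
  P^T = P -> P *m P = P -> P *m phi = phi ->
  P *m qgrad Xt y w phi = 0 ->
  let u := pinv (Xt *m P) *m (y - pinv (P *m Xt^T) *m w) in
  P *m u = u /\ Xt *m (phi - u) = 0.
Proof.
move=> symP idemP Pphi Pgrad0 u; set M := Xt *m P.
have PXt : P *m Xt^T = M^T by rewrite /M trmx_mul symP.
rewrite PXt in u *.
have [MMpM _ MMp_sym _] := pinvP M; set Mp := pinv M in MMpM MMp_sym u *.
have [MtNpMt _ MtNp_sym _] := pinvP M^T; set Np := pinv M^T in MtNpMt MtNp_sym u *.
have Pu : P *m u = u by rewrite /u mulmxA proj_mul_pinv.
split => //; set d := phi - u.
have Pd : P *m d = d by rewrite /d mulmxBr Pphi Pu.
have MtMMp : M^T *m M *m Mp = M^T.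
  by rewrite -mulmxA -MMp_sym -trmx_mul MMpM.
have MtNpP : M^T *m Np *m P = M^T *m Np.
  by rewrite -MtNp_sym trmx_mul trmxK /M !mulmxA -(mulmxA _ P P) idemP.
have Pw : P *m w = M^T *m y - M^T *m Xt *m phi.
  move/eqP: Pgrad0; rewrite /qgrad mulmxBr subr_eq0 => /eqP ->.
  by rewrite mulmxA PXt mulmxBr mulmxA.
have MtNpw : M^T *m Np *m w = P *m w.
  by rewrite -MtNpP -mulmxA Pw mulmxBr !mulmxA MtNpMt.
have Md : M *m d = 0.
  apply: mulmx_gram_eq0.
  have -> : M *m d = Xt *m d by rewrite /M -mulmxA Pd.
  have Xtu : Xt *m u = M *m u by rewrite /M -mulmxA Pu.
  rewrite /d !mulmxBr Xtu /u (mulmxA M Mp) (mulmxA M^T (M *m Mp)) (mulmxA M^T M Mp).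
  by rewrite MtMMp mulmxBr !mulmxA MtNpw Pw subKr subrr.
by rewrite -Pd mulmxA.
Qed.

End PseudoInverse.

Lemma feasible_face_dir (R : realType) p (phi s : 'cV[R]_(dimphi p)) :
  feasible phi -> nullsp (Lmat R p) s -> null_Dinact (active phi) s ->
  exists2 e : R, 0 < e & forall t, `|t| <= e -> feasible (phi + t *: s).
Proof.
move=> [Dphi Lphi] Ls Ds.
pose f i := (Dmat R p *m phi) i 0 / (`|(Dmat R p *m s) i 0| + 1).
have [e e_gt0 e_le] : exists2 e, 0 < e & forall i, i \in active phi -> e <= f i.
  apply: finite_pos_lower_bound => i; rewrite inE => Di.
  by rewrite divr_gt0 // ltr_wpDl.
exists e => // t te; split.
- move=> i; rewrite mulmxDr -scalemxAr mxE [X in _ + X]mxE.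
  case: (boolP (i \in active phi)) => iA.
    by apply: addr_small_ge0; [move: iA; rewrite inE | exact: le_trans (e_le i iA)].
  by rewrite (Ds i iA) mulr0 addr0.
- by rewrite /nullsp mulmxDr -scalemxAr Ls Lphi scaler0 addr0.
Qed.

Lemma orth_proj_faceP (R : realType) p (A : {set 'I_#|Didx p|}) :
  let S v := nullsp (Lmat R p) v /\ null_Dinact A v in
  is_orth_proj S (orth_proj S).
Proof.
apply: (orth_proj_kernel (K := col_mx (Lmat R p)
          (diag_mx (\row_i (i \notin A)%:R) *m Dmat R p))) => v.
rewrite /nullsp /null_Dinact kernel_mask_mulmxP mul_col_mx; split=> [[-> ->] | ].
  by rewrite col_mx0.
by move/eqP; rewrite col_mx_eq0 => /andP [/eqP -> /eqP ->].
Qed.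

Lemma feasible_null_Dinact (R : realType) p (phi : 'cV[R]_(dimphi p)) :
  feasible phi -> null_Dinact (active phi) phi.
Proof.
move=> [Dphi _] i; rewrite inE -leNgt => Di.
by apply: le_anti; rewrite Di Dphi.
Qed.

Theorem lemma1 (R : realType) (n p : nat) (y : 'cV[R]_n) (X : 'M[R]_(n, p))
    (lam : R) (phihat : 'cV[R]_(dimphi p)) :
  0 < lam ->
  is_solution y X lam phihat ->
  let A := active phihat in
  let P := orth_proj (fun v => nullsp (Lmat R p) v /\ null_Dinact A v) in
  let Xt := Xtil X in
  let u := pinv (Xt *m P) *m (y - pinv (P *m Xt^T) *m wvec p lam) in
  exists b : 'cV[R]_(dimphi p),
    [/\ nullsp Xt b, nullsp (Lmat R p) b, null_Dinact A b,
        phihat = u + b &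
        forall i, i \in A -> 0 < (Dmat R p *m (u + b)) i 0].
Proof.
(* only first-order optimality on the face is used, so the sign of lam is irrelevant *)
move=> _ [feas_phi opt_phi] A P Xt u.
have [symP idemP rangeP] := orth_proj_faceP R A.
have Pphi : P *m phihat = phihat.
  by apply/rangeP; split; [exact: feas_phi.2 | exact: feasible_null_Dinact].
set g := qgrad Xt y (wvec p lam) phihat.
have grad_orth s : nullsp (Lmat R p) s -> null_Dinact A s -> (g^T *m s) 0 0 = 0.
  move=> Ls Ds; have [e e_gt0 feas_t] := feasible_face_dir feas_phi Ls Ds.
  by apply: (qobj_min_dir e_gt0) => t /feas_t; apply: opt_phi.
have Pg : P *m g = 0.
  have [LPg DPg] : nullsp (Lmat R p) (P *m g) /\ null_Dinact A (P *m g).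
    by apply/rangeP; rewrite mulmxA idemP.
  apply: sym_idem_quad_eq0 => //; apply/matrixP => i j.
  by rewrite !ord1 grad_orth // mxE.
have [Pu Xt_b] := pinv_normal_solution symP idemP Pphi Pg.
have [Lb Db] : nullsp (Lmat R p) (phihat - u) /\ null_Dinact A (phihat - u).
  by apply/rangeP; rewrite mulmxBr Pphi Pu.
exists (phihat - u); split => //; first by rewrite addrC subrK.
by move=> i; rewrite addrC subrK inE.
Qed.
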